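(* Let $(X,d)$ be a reflexive Busemann convex geodesic metric space and let $A,B\subseteq X$ be nonempty, closed and convex, with $A$ bounded. Let $T:A\cup B\to A\cup B$ be a cyclic relatively nonexpansive mapping, and suppose the pair $(A,B)$ has proximal normal structure. Then there exists $(x,y)\in A\times B$ such that $d(x,Tx)=d(y,Ty)=\operatorname{dist}(A,B)$.
   Context: $\operatorname{dist}(A,B)=\inf\{d(x,y):x\in A,y\in B\}$, $\delta(x,A)=\sup\{d(x,y):y\in A\}$, $\delta(A,B)=\sup\{d(x,y):x\in A,y\in B\}$. A geodesic space is one in which any two points are joined by a geodesic segment; a subset is convex if it contains every geodesic segment joining two of its points. $X$ is Busemann convex if for any geodesics $c_1:[0,l_1]\to X$, $c_2:[0,l_2]\to X$, $d(c_1(tl_1),c_2(tl_2))\le (1-t)d(c_1(0),c_2(0))+t\,d(c_1(l_1),c_2(l_2))$ for all $t\in[0,1]$. $X$ is reflexive if every decreasing chain of nonempty closed convex bounded subsets has nonempty intersection. $T$ is relatively nonexpansive if $d(Tx,Ty)\le d(x,y)$ for all $x\in A$, $y\in B$; it is cyclic if $T(A)\subseteq B$ and $T(B)\subseteq A$. A pair $(H_1,H_2)$ is proximal if for every $(a,b)\in H_1\times H_2$ there is $(a',b')\in H_1\times H_2$ with $d(a,b')=d(a',b)=\operatorname{dist}(H_1,H_2)$. A convex pair $(K_1,K_2)$ has proximal normal structure if for every closed bounded convex proximal pair $(H_1,H_2)$ with $H_1\subseteq K_1$, $H_2\subseteq K_2$, $\operatorname{dist}(H_1,H_2)=\operatorname{dist}(K_1,K_2)$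 and $\delta(H_1,H_2)>\operatorname{dist}(H_1,H_2)$, there exists $(x_1,x_2)\in H_1\times H_2$ with $\delta(x_1,H_2)<\delta(H_1,H_2)$ and $\delta(x_2,H_1)<\delta(H_1,H_2)$. *)

From HB Require Import structures.
From mathcomp Require Import all_boot all_order all_algebra.
From mathcomp Require Import all_classical all_reals.
Set Implicit Arguments. Unset Strict Implicit. Unset Printing Implicit Defensive.
Import Order.TTheory GRing.Theory Num.Theory.
Local Open Scope ring_scope.
Local Open Scope classical_set_scope.

Section MetricDefs.
Variables (R : realType) (X : Type) (d : X -> X -> R).

Definition is_metric : Prop :=
  [/\ forall x y, 0 <= d x y,
      forall x y, d x y = 0 <-> x = y,
      forall x y, d x y = d y x &
      forall x y z, d x z <= d x y + d y z].

Definition geodesic (c : R -> X) (l : R) : Prop :=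
  0 <= l /\ forall s t, 0 <= s <= l -> 0 <= t <= l -> d (c s) (c t) = `|s - t|.

Definition geodesic_space : Prop :=
  forall x y, exists c, [/\ geodesic c (d x y), c 0 = x & c (d x y) = y].

Definition convex_set (C : set X) : Prop :=
  forall x y (c : R -> X) (l : R), C x -> C y -> geodesic c l ->
    c 0 = x -> c l = y -> forall t, 0 <= t <= l -> C (c t).

Definition busemann_convex : Prop :=
  forall (c1 c2 : R -> X) (l1 l2 : R), geodesic c1 l1 -> geodesic c2 l2 ->
    forall t, 0 <= t <= 1 ->
      d (c1 (t * l1)) (c2 (t * l2)) <=
        (1 - t) * d (c1 0) (c2 0) + t * d (c1 l1) (c2 l2).

Definition mclosed (C : set X) : Prop :=
  forall x, (forall e : R, 0 < e -> exists y, C y /\ d x y < e) -> C x.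

Definition mbounded (C : set X) : Prop :=
  exists M : R, forall x y, C x -> C y -> d x y <= M.

Definition reflexive_space : Prop :=
  forall F : set (set X), F !=set0 ->
    (forall C1 C2, F C1 -> F C2 -> C1 `<=` C2 \/ C2 `<=` C1) ->
    (forall C, F C -> [/\ C !=set0, mclosed C, convex_set C & mbounded C]) ->
    exists x, forall C, F C -> C x.

Definition dist_set (A B : set X) : R :=
  inf [set r | exists x y, [/\ A x, B y & r = d x y]].

Definition delta_pt (x : X) (A : set X) : R :=
  sup [set r | exists y, A y /\ r = d x y].

Definition delta_set (A B : set X) : R :=
  sup [set r | exists x y, [/\ A x, B y & r = d x y]].

Definition relatively_nonexpansive (A B : set X) (T : X -> X) : Prop :=
  forall x y, A x -> B y -> d (T x) (T y) <= d x y.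

Definition cyclic_map (A B : set X) (T : X -> X) : Prop :=
  T @` A `<=` B /\ T @` B `<=` A.

Definition proximal_pair (H1 H2 : set X) : Prop :=
  forall a b, H1 a -> H2 b ->
    exists a' b', [/\ H1 a', H2 b', d a b' = dist_set H1 H2 &
                      d a' b = dist_set H1 H2].

Definition proximal_normal_structure (K1 K2 : set X) : Prop :=
  forall H1 H2 : set X,
    mclosed H1 -> mclosed H2 -> mbounded H1 -> mbounded H2 ->
    convex_set H1 -> convex_set H2 -> proximal_pair H1 H2 ->
    H1 `<=` K1 -> H2 `<=` K2 ->
    dist_set H1 H2 = dist_set K1 K2 ->
    dist_set H1 H2 < delta_set H1 H2 ->
    exists x1 x2, [/\ H1 x1, H2 x2, delta_pt x1 H2 < delta_set H1 H2 &
                     delta_pt x2 H1 < delta_set H1 H2].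

End MetricDefs.

From HB Require Import structures.
From mathcomp Require Import all_boot all_order all_algebra.
From mathcomp Require Import all_classical all_reals.
From mathcomp Require Import lra.
Import Order.TTheory GRing.Theory Num.Theory.
Set Implicit Arguments. Unset Strict Implicit. Unset Printing Implicit Defensive.
Local Open Scope ring_scope.
Local Open Scope classical_set_scope.

(* Call (E, F) invariant when E in A and F in B are nonempty, closed, convex
   and bounded, T maps E into F and F into E, and dist(E, F) = dist(A, B).
   Reflexivity makes the intersection of a chain of invariant pairs invariant,
   so Zorn's lemma gives a minimal one (K1, K2).  By minimality every point of
   K1 has a point of K2 at distance dist(A, B) and vice versa, so the pair is
   proximal, and every closed convex set containing T(K2) contains K1.
   If delta(K1, K2) > dist(A, B), proximal normal structure yields x1, x2 with
   farthest distances below delta(K1, K2); Busemann midpoints of x1, x2 and of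
   their proximal partners then give some r < delta(K1, K2) for which the
   centre sets {x in K1 | d(x, y) <= r for all y in K2} and
   {y in K2 | d(y, x) <= r for all x in K1} form an invariant pair inside
   (K1, K2); by minimality it is all of (K1, K2), forcing delta(K1, K2) <= r.
   Hence d(x, y) = dist(A, B) on K1 x K2, in particular for y = T x. *)

Section ProximalNormalStructure.
Variables (R : realType) (X : Type) (d : X -> X -> R).

Lemma segment_param (l s : R) : 0 <= s <= l -> exists2 t, 0 <= t <= 1 & s = t * l.
Proof.
move=> /andP[s0 sl]; have [l0|l0] := eqVneq l 0.
  by exists 0; rewrite ?lexx ?ler01 // mul0r; apply/le_anti; rewrite s0 andbT -l0.
have lp : 0 < l by rewrite lt_neqAle eq_sym l0 (le_trans s0 sl).
exists (s / l); last by rewrite divfK.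
by rewrite divr_ge0 ?ler_pdivrMr ?mul1r ?(ltW lp).
Qed.

Lemma convex_comb_le (t a b r : R) : 0 <= t <= 1 -> a <= r -> b <= r ->
  (1 - t) * a + t * b <= r.
Proof. by move=> /andP[t0 t1] ar br; nra. Qed.

Hypothesis Hd : is_metric d.

Lemma d_ge0 x y : 0 <= d x y. Proof. by case: Hd. Qed.
Lemma dC x y : d x y = d y x. Proof. by case: Hd. Qed.
Lemma d_triangle x y z : d x z <= d x y + d y z. Proof. by case: Hd. Qed.
Lemma dxx x : d x x = 0. Proof. by case: Hd => _ H _ _; apply/H. Qed.

Lemma mclosed_ball x r : mclosed d [set y | d x y <= r].
Proof.
move=> y H; apply/ler_addgt0Pr => e e0.
have [z [/= zr dz]] := H e e0.
by have := d_triangle x z y; rewrite (dC z y); lra.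
Qed.

Lemma mclosed_bigcap (I : Type) (S : set I) (P : I -> set X) :
  (forall i, S i -> mclosed d (P i)) -> mclosed d [set x | forall i, S i -> P i x].
Proof.
move=> H x Hx i Si; apply: (H i Si) => e e0.
by have [y [Py dy]] := Hx e e0; exists y; split => //; apply: Py.
Qed.

Lemma mclosedI (C1 C2 : set X) :
  mclosed d C1 -> mclosed d C2 -> mclosed d (C1 `&` C2).
Proof.
move=> h1 h2 x Hx; split; [apply: h1|apply: h2] => e e0;
  by have [y [[? ?] ?]] := Hx e e0; exists y.
Qed.

Lemma mbounded_sub (C1 C2 : set X) : C1 `<=` C2 -> mbounded d C2 -> mbounded d C1.
Proof. by move=> s [M HM]; exists M => x y /s hx /s hy; apply: HM. Qed.

Lemma dist_set_le (A B : set X) x y : A x -> B y -> dist_set d A B <= d x y.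
Proof.
move=> Ax By; apply: ge_inf; last by exists x, y.
by exists 0 => r [x' [y' [_ _ ->]]]; exact: d_ge0.
Qed.

Lemma dist_setC (A B : set X) : dist_set d A B = dist_set d B A.
Proof.
congr inf; apply/seteqP; split => r [x [y [Ax By ->]]];
  by exists y, x; rewrite dC.
Qed.

Lemma dist_set_attained (E F : set X) x y : E x -> F y ->
  (forall x' y', E x' -> F y' -> d x y <= d x' y') -> dist_set d E F = d x y.
Proof.
move=> Ex Fy H; apply/le_anti; rewrite dist_set_le //=.
apply: lb_le_inf; first by exists (d x y), x, y.
by move=> r [x' [y' [Ex' Fy' ->]]]; apply: H.
Qed.

Lemma delta_pt_ub (K : set X) x y : mbounded d K -> K y -> d x y <= delta_pt d x K.
Proof.
move=> [M HM] Ky; apply: ub_le_sup; last by exists y.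
exists (d x y + M) => _ [y' [Ky' ->]].
by have := d_triangle x y y'; have := HM y y' Ky Ky'; lra.
Qed.

Lemma delta_set_ub (K1 K2 : set X) x y : mbounded d K1 -> mbounded d K2 ->
  K1 x -> K2 y -> d x y <= delta_set d K1 K2.
Proof.
move=> [M1 HM1] [M2 HM2] K1x K2y; apply: ub_le_sup; last by exists x, y.
exists (M1 + d x y + M2) => _ [x' [y' [K1x' K2y' ->]]].
have := d_triangle x' x y'; have := d_triangle x y y'.
by have := HM1 x' x K1x' K1x; have := HM2 y y' K2y K2y'; lra.
Qed.

(* [near_pt x F c] and [near_set E F c] say inf_{y in F} d(x, y) <= c and
   dist(E, F) <= c without taking infima, and [near_part E F c] is the relaxed
   proximal part {x in E | d(x, F) <= c}. *)
Definition near_pt (x : X) (F : set X) (c : R) :=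
  forall e, 0 < e -> exists2 y, F y & d x y <= c + e.

Definition near_set (E F : set X) (c : R) :=
  forall e, 0 < e -> exists x y, [/\ E x, F y & d x y <= c + e].

Definition near_part (E F : set X) (c : R) := [set x | E x /\ near_pt x F c].

Lemma near_setC E F c : near_set E F c -> near_set F E c.
Proof.
by move=> H e e0; have [x [y [Ex Fy dxy]]] := H e e0; exists y, x; rewrite dC.
Qed.

Lemma near_set_dist (A B : set X) : A !=set0 -> B !=set0 ->
  near_set A B (dist_set d A B).
Proof.
move=> [a Aa] [b Bb] e e0.
have [_ [x [y [Ax By ->]]] lt] :
    exists2 r, [set r | exists x y, [/\ A x, B y & r = d x y]] r &
               r < dist_set d A B + e.
  apply: inf_adherent => //; split; first by exists (d a b), a, b.
  by exists 0 => r [x [y [_ _ ->]]]; exact: d_ge0.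
by exists x, y; split => //; apply: ltW.
Qed.

Lemma near_part_sub E F c : near_part E F c `<=` E.
Proof. by move=> x []. Qed.

Lemma near_partS E E' F F' (c c' : R) : E `<=` E' -> F `<=` F' -> c <= c' ->
  near_part E F c `<=` near_part E' F' c'.
Proof.
move=> sE sF cc x [Ex H]; split; first exact: sE.
move=> e e0; have [y Fy dy] := H e e0; exists y; first exact: sF.
lra.
Qed.

Lemma near_part_closed E F c : mclosed d E -> mclosed d (near_part E F c).
Proof.
move=> cE x Hx; split.
  by apply: cE => e e0; have [y [[? ?] ?]] := Hx e e0; exists y.
move=> e e0; have e20 : 0 < e / 2 by rewrite divr_gt0.
have [z [[Ez Hz] dz]] := Hx _ e20; have [y Fy dy] := Hz _ e20.
by exists y => //; have := d_triangle x z y; lra.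
Qed.

Lemma near_part_image (T : X -> X) E F E' F' c :
  (forall x y, E x -> F y -> d (T x) (T y) <= d x y) ->
  T @` E `<=` E' -> T @` F `<=` F' -> T @` near_part E F c `<=` near_part E' F' c.
Proof.
move=> HT TE TF _ [x [Ex H] <-]; split; first by apply: TE; exists x.
move=> e e0; have [y Fy dy] := H e e0.
by exists (T y); [apply: TF; exists y | apply: le_trans (HT _ _ Ex Fy) dy].
Qed.

Hypothesis Hbus : busemann_convex d.

Lemma busemann_const c (l : R) x (t : R) : geodesic d c l -> 0 <= t <= 1 ->
  d (c (t * l)) x <= (1 - t) * d (c 0) x + t * d (c l) x.
Proof.
move=> gc; apply: (Hbus gc (_ : geodesic d (fun=> x) 0)).
split => // u v /andP[u0 u1] /andP[v0 v1].
have -> : u = 0 by apply/le_anti; rewrite u0 u1.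
have -> : v = 0 by apply/le_anti; rewrite v0 v1.
by rewrite dxx subrr normr0.
Qed.

Lemma convex_ball x r : convex_set d [set y | d x y <= r].
Proof.
move=> y1 y2 c l b1 b2 gc c0 cl s /segment_param[t t01 ->] /=.
rewrite dC; apply: le_trans (busemann_const x gc t01) _.
by rewrite c0 cl; apply: convex_comb_le; rewrite // dC.
Qed.

Lemma convex_bigcap (I : Type) (S : set I) (P : I -> set X) :
  (forall i, S i -> convex_set d (P i)) ->
  convex_set d [set x | forall i, S i -> P i x].
Proof.
move=> H y1 y2 c l h1 h2 gc c0 cl s sl i Si.
exact: (H i Si y1 y2 c l (h1 i Si) (h2 i Si) gc c0 cl s sl).
Qed.

Lemma convexI (C1 C2 : set X) :
  convex_set d C1 -> convex_set d C2 -> convex_set d (C1 `&` C2).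
Proof.
move=> H1 H2 y1 y2 c l [a1 b1] [a2 b2] gc c0 cl s sl.
split; first exact: (H1 y1 y2 c l a1 a2 gc c0 cl s sl).
exact: (H2 y1 y2 c l b1 b2 gc c0 cl s sl).
Qed.

Definition admissible (C : set X) :=
  [/\ mclosed d C, convex_set d C & mbounded d C].

Lemma admissibleI E C : admissible E -> mclosed d C -> convex_set d C ->
  admissible (E `&` C).
Proof.
move=> [cE vE bE] cC vC.
by split; [exact: mclosedI|exact: convexI|exact: mbounded_sub bE].
Qed.

Lemma admissible_bigcap (I : Type) (S : set I) (P : I -> set X) i0 : S i0 ->
  (forall i, S i -> admissible (P i)) -> admissible [set x | forall i, S i -> P i x].
Proof.
move=> Si0 H; have [_ _ b0] := H i0 Si0; split.
- by apply: mclosed_bigcap => i /H [].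
- by apply: convex_bigcap => i /H [].
- by apply: mbounded_sub b0 => x /(_ i0 Si0).
Qed.

Definition center (K F : set X) (r : R) :=
  [set x | K x /\ forall y, F y -> d x y <= r].

Lemma center_sub K F r : center K F r `<=` K.
Proof. by move=> x []. Qed.

Lemma center_admissible K F r : admissible K -> admissible (center K F r).
Proof.
move=> aK.
have -> : center K F r = K `&` [set x | forall y, F y -> [set x | d y x <= r] x].
  by apply/seteqP; split => x [Kx H]; split => // y /H; rewrite dC.
apply: admissibleI => //.
  by apply: mclosed_bigcap => y _; exact: mclosed_ball.
by apply: convex_bigcap => y _; exact: convex_ball.
Qed.

Definition midpoint (x y z : X) :=
  (forall C, convex_set d C -> C x -> C y -> C z) /\
  forall w, d z w <= (d x w + d y w) / 2.

Lemma invr2_itv01 : 0 <= (2 : R)^-1 <= 1.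
Proof. by apply/andP; split; lra. Qed.

Lemma geodesic_midpoint c (l : R) :
  geodesic d c l -> midpoint (c 0) (c l) (c (2^-1 * l)).
Proof.
move=> gc; split => [C vC C0 Cl|w].
  case: (gc) => l0 _; case/andP: invr2_itv01 => h0 h1.
  apply: (vC (c 0) (c l) c l C0 Cl gc erefl erefl).
  by rewrite mulr_ge0 //= ler_piMl.
by apply: le_trans (busemann_const w gc invr2_itv01) _; lra.
Qed.

Hypothesis Hgeo : geodesic_space d.

Lemma exists_midpoints x1 y1 x2 y2 : exists z1 z2,
  [/\ midpoint x1 y1 z1, midpoint x2 y2 z2 & d z1 z2 <= (d x1 x2 + d y1 y2) / 2].
Proof.
have [c1 [g1 c10 c1l]] := Hgeo x1 y1; have [c2 [g2 c20 c2l]] := Hgeo x2 y2.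
have := geodesic_midpoint g1; have := geodesic_midpoint g2.
rewrite c10 c1l c20 c2l => m2 m1; do 2 eexists; split; [exact: m1|exact: m2|].
by apply: le_trans (Hbus g1 g2 invr2_itv01) _; rewrite c10 c1l c20 c2l; lra.
Qed.

Lemma near_part_convex E F c :
  convex_set d E -> convex_set d F -> convex_set d (near_part E F c).
Proof.
move=> vE vF x1 x2 g l [E1 H1] [E2 H2] gg g0 gl s sl; split.
  exact: (vE x1 x2 g l E1 E2 gg g0 gl s sl).
move=> e e0; have [y1 F1 d1] := H1 e e0; have [y2 F2 d2] := H2 e e0.
have [h [gh h0 hl]] := Hgeo y1 y2.
have [t t01 ->] := segment_param sl.
have [l0 _] := gh; case/andP: (t01) => t0 t1.
exists (h (t * d y1 y2)).
  by apply: (vF y1 y2 h (d y1 y2)) => //; rewrite mulr_ge0 //= ler_piMl.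
apply: le_trans (Hbus gg gh t01) _.
by rewrite g0 gl h0 hl; apply: convex_comb_le.
Qed.

Lemma near_part_admissible E F c :
  admissible E -> convex_set d F -> admissible (near_part E F c).
Proof.
move=> [cE vE bE] vF; split.
- exact: near_part_closed.
- exact: near_part_convex.
- exact: mbounded_sub (@near_part_sub _ _ _) bE.
Qed.

Hypothesis Hrefl : reflexive_space d.

Lemma reflexive_chain (I : Type) (J : set I) (S : I -> set X) : J !=set0 ->
  (forall i j, J i -> J j -> S i `<=` S j \/ S j `<=` S i) ->
  (forall i, J i -> S i !=set0 /\ admissible (S i)) ->
  exists x, forall i, J i -> S i x.
Proof.
move=> [i0 Ji0] Htot HS.
have [x Hx] : exists x, forall C, (S @` J) C -> C x.
  apply: Hrefl; first by exists (S i0), i0.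
    by move=> _ _ [i Ji <-] [j Jj <-]; apply: Htot.
  by move=> _ [i Ji <-]; have [ne [? ? ?]] := HS i Ji.
by exists x => i Ji; apply: Hx; exists i.
Qed.

Lemma reflexive_nested (S : R -> set X) :
  (forall a b, 0 < a -> a <= b -> S a `<=` S b) ->
  (forall a, 0 < a -> S a !=set0 /\ admissible (S a)) ->
  exists x, forall a, 0 < a -> S a x.
Proof.
move=> mono; apply: reflexive_chain; first by exists 1.
by move=> a b a0 b0; case/orP: (le_total a b) => ab; [left|right]; exact: mono.
Qed.

Lemma near_pt_attained x F c : admissible F -> near_pt x F c ->
  exists2 y, F y & d x y <= c.
Proof.
move=> aF H.
have [||y Hy] := @reflexive_nested (fun a => F `&` [set y | d x y <= c + a]).
- by move=> a b a0 ab y [Fy /= dy]; split => //=; lra.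
- move=> a a0; split; first by have [y Fy dy] := H a a0; exists y.
  by apply: admissibleI => //; [exact: mclosed_ball|exact: convex_ball].
exists y; first by have [] := Hy 1 ltr01.
by apply/ler_addgt0Pr => e e0; have [] := Hy e e0.
Qed.

Lemma near_part_neq0 E F c : admissible E -> admissible F -> near_set E F c ->
  near_part E F c !=set0.
Proof.
move=> aE [_ vF _] H.
have [||x Hx] := @reflexive_nested (fun a => near_part E F (c + a)).
- by move=> a b a0 ab; apply: near_partS => //; lra.
- move=> a a0; split; last exact: near_part_admissible.
  have [x [y [Ex Fy dxy]]] := H a a0; exists x; split => // e e0.
  by exists y => //; lra.
exists x; split; first by have [] := Hx 1 ltr01.
move=> e e0; have e20 : 0 < e / 2 by rewrite divr_gt0.
have [_ H2] := Hx _ e20; have [y Fy dy] := H2 _ e20.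
by exists y => //; lra.
Qed.

Lemma near_set_near_part E F c : admissible E -> admissible F -> near_set E F c ->
  near_set (near_part E F c) (near_part F E c) c.
Proof.
move=> aE aF H e e0.
have [x [Ex Hx]] := near_part_neq0 aE aF H.
have [y Fy dxy] := near_pt_attained aF Hx.
exists x, y; split => //; last lra.
by split => // e' e'0; exists x => //; rewrite dC; lra.
Qed.

Definition subpair (p q : set X * set X) := p.1 `<=` q.1 /\ p.2 `<=` q.2.

Lemma near_set_chain (C : set (set X * set X)) c : C !=set0 ->
  (forall p q, C p -> C q -> subpair p q \/ subpair q p) ->
  (forall p, C p -> [/\ admissible p.1, admissible p.2 & near_set p.1 p.2 c]) ->
  near_set [set x | forall p, C p -> p.1 x] [set y | forall p, C p -> p.2 y] c.
Proof.
move=> [p0 Cp0] Htot HC.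
have [x Hx] : exists x, forall p, C p -> near_part p.1 p.2 c x.
  apply: reflexive_chain; first by exists p0.
    move=> p q Cp Cq.
    by case: (Htot p q Cp Cq) => -[h1 h2]; [left|right]; apply: near_partS.
  move=> p Cp; have [aE aF nEF] := HC p Cp; split; first exact: near_part_neq0.
  by case: aF => _ vF _; exact: near_part_admissible.
move=> e e0.
have [y Hy] : exists y, forall p, C p -> (p.2 `&` [set y | d x y <= c + e]) y.
  apply: reflexive_chain; first by exists p0.
    by move=> p q Cp Cq; case: (Htot p q Cp Cq) => -[_ h]; [left|right]; apply: setSI.
  move=> p Cp; have [_ aF _] := HC p Cp; split.
    by have [_ H] := Hx p Cp; have [y Fy dy] := H e e0; exists y.
  by apply: admissibleI => //; [exact: mclosed_ball|exact: convex_ball].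
exists x, y; split; last by have [] := Hy p0 Cp0.
- by move=> p Cp; have [] := Hx p Cp.
- by move=> p Cp; have [] := Hy p Cp.
Qed.

Section CyclicPair.
Variables (A B : set X) (T : X -> X).
Local Notation D := (dist_set d A B).

(* dist(E,F) = dist(A,B) is encoded by [near_set E F D]: the other inequality
   is automatic for E in A and F in B. *)
Definition invariant_pair (E F : set X) :=
  [/\ E `<=` A, F `<=` B, admissible E, admissible F &
      [/\ T @` E `<=` F, T @` F `<=` E & near_set E F D]].

Definition minimal_invariant_pair (K1 K2 : set X) :=
  invariant_pair K1 K2 /\ forall E F, invariant_pair E F ->
    E `<=` K1 -> F `<=` K2 -> K1 `<=` E /\ K2 `<=` F.

Lemma invariant_pair_chain (C : set (set X * set X)) : C !=set0 ->
  (forall p, C p -> invariant_pair p.1 p.2) ->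
  (forall p q, C p -> C q -> subpair p q \/ subpair q p) ->
  invariant_pair [set x | forall p, C p -> p.1 x] [set y | forall p, C p -> p.2 y].
Proof.
move=> [p0 Cp0] HC Htot; have [sA sB _ _ _] := HC p0 Cp0.
split.
- by move=> x /(_ p0 Cp0) /sA.
- by move=> y /(_ p0 Cp0) /sB.
- by apply: (admissible_bigcap Cp0) => p /HC[].
- by apply: (admissible_bigcap Cp0) => p /HC[].
split.
- move=> _ [x Hx <-] p Cp; have [_ _ _ _ [TEF _ _]] := HC p Cp.
  by apply: TEF; exists x => //; apply: Hx.
- move=> _ [y Hy <-] p Cp; have [_ _ _ _ [_ TFE _]] := HC p Cp.
  by apply: TFE; exists y => //; apply: Hy.
apply: near_set_chain => //; first by exists p0.
by move=> p /HC[_ _ aE aF [_ _ nEF]].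
Qed.

Lemma exists_minimal_invariant_pair : (exists E F, invariant_pair E F) ->
  exists K1 K2, minimal_invariant_pair K1 K2.
Proof.
move=> [E [F HEF]].
pose P := {p : set X * set X | invariant_pair p.1 p.2}.
pose coarser (p q : P) : bool := `[< subpair (sval q) (sval p) >].
have [t Ht] : exists t, premaximal coarser t.
  apply: (@ZL_preorder P (exist _ (E, F) HEF)).
  - by move=> p; apply/asboolP; split.
  - move=> p q r /asboolP [h1 h2] /asboolP [h3 h4]; apply/asboolP.
    by split => x hx; [apply: h1; apply: h3|apply: h2; apply: h4].
  move=> S Htot.
  have [[s0 Ss0]|S0] := pselect (S !=set0); last first.
    by exists (exist _ (E, F) HEF) => s Ss; exfalso; apply: S0; exists s.
  pose C := [set sval s | s in S].
  have HC : invariant_pair [set x | forall p, C p -> p.1 x]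
                           [set y | forall p, C p -> p.2 y].
    apply: invariant_pair_chain; first by exists (sval s0), s0.
      by move=> _ [s _ <-]; exact: (svalP s).
    move=> _ _ [s Ss <-] [s' Ss' <-].
    by case: (Htot s s' Ss Ss') => /asboolP h; [right|left].
  exists (exist (fun p => invariant_pair p.1 p.2) (_, _) HC) => s Ss.
  by apply/asboolP; split => /= x Hx; apply: Hx; exists s.
exists (sval t).1, (sval t).2; split; first exact: (svalP t).
move=> E' F' HEF' sE sF.
have /asboolP [] // : coarser (exist (fun p => invariant_pair p.1 p.2) (E', F') HEF') t.
by apply: Ht; apply/asboolP; split.
Qed.

Hypothesis HTne : relatively_nonexpansive d A B T.

Lemma invariant_pair_init : A !=set0 -> B !=set0 -> mclosed d A -> mclosed d B ->
  convex_set d A -> convex_set d B -> mbounded d A -> cyclic_map A B T ->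
  exists F, invariant_pair A F.
Proof.
move=> [a Aa] [b Bb] cA cB vA vB [M HM] [TAB TBA].
(* B may be unbounded: cut it down to a ball around b large enough to contain
   T(A) and almost closest points to A. *)
have Dab : D <= d a b := dist_set_le Aa Bb.
have Tb0 := d_ge0 b (T b); have ab0 := d_ge0 a b.
pose r := d b (T b) + M + d a b + d a b + 1.
exists (B `&` [set y | d b y <= r]); split => //.
- by split; last exists M.
- split.
  + by apply: mclosedI => //; exact: mclosed_ball.
  + by apply: convexI => //; exact: convex_ball.
  + exists (r + r) => y y' [_ /= hy] [_ /= hy'].
    by have := d_triangle y b y'; rewrite (dC y b); lra.
split.
- move=> _ [x Ax <-]; split; first by apply: TAB; exists x.
  have := d_triangle b (T b) (T x); have := HTne Ax Bb; rewrite (dC (T x)).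
  by have := d_triangle x a b; have := HM x a Ax Aa; rewrite /r /=; lra.
- by move=> _ [y [By _] <-]; apply: TBA; exists y.
move=> e e0; have m0 : 0 < Num.min e 1 by rewrite lt_min e0 ltr01.
have [x [y [Ax By dxy]]] := near_set_dist (ex_intro _ a Aa) (ex_intro _ b Bb) m0.
have me : Num.min e 1 <= e by rewrite ge_min lexx.
have m1 : Num.min e 1 <= 1 by rewrite ge_min lexx orbT.
exists x, y; split => //; last lra.
split => //=; have := d_triangle b a y; have := d_triangle a x y.
by have := HM a x Aa Ax; rewrite (dC b a) /r; lra.
Qed.

Section Minimal.
Variables K1 K2 : set X.
Hypothesis HK : minimal_invariant_pair K1 K2.

Lemma minimal_near_part : K1 `<=` near_part K1 K2 D.
Proof.
have [[sA sB aK1 aK2 [T12 T21 nK]] Kmin] := HK.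
have [_ vK1 _] := aK1; have [_ vK2 _] := aK2.
have HQ : invariant_pair (near_part K1 K2 D) (near_part K2 K1 D).
  split.
  - by move=> x /near_part_sub /sA.
  - by move=> x /near_part_sub /sB.
  - exact: near_part_admissible.
  - exact: near_part_admissible.
  split; last exact: near_set_near_part.
  - by apply: near_part_image => // x y /sA Ax /sB By; exact: HTne.
  - apply: near_part_image => // x y /sB Bx /sA Ay.
    by rewrite dC (dC x); exact: HTne.
by have [] := Kmin _ _ HQ (@near_part_sub _ _ _) (@near_part_sub _ _ _).
Qed.

Lemma minimal_proximal x : K1 x -> exists2 y, K2 y & d x y = D.
Proof.
have [[sA sB _ aK2 _] _] := HK.
move=> /minimal_near_part [K1x /(near_pt_attained aK2) [y K2y dxy]].
by exists y => //; apply/le_anti; rewrite dxy dist_set_le //; [exact: sA|exact: sB].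
Qed.

Lemma minimal_hull C : mclosed d C -> convex_set d C -> T @` K2 `<=` C -> K1 `<=` C.
Proof.
have [[sA sB aK1 aK2 [T12 T21 nK]] Kmin] := HK.
move=> cC vC TC.
have HC : invariant_pair (K1 `&` C) K2.
  split => //.
  - by move=> x [/sA].
  - exact: admissibleI.
  split.
  - by move=> _ [x [K1x _] <-]; apply: T12; exists x.
  - by move=> _ [y K2y <-]; split; [apply: T21|apply: TC]; exists y.
  move=> e e0; have [x [y [K1x K2y dxy]]] := nK e e0.
  exists (T y), (T x); split.
  - by split; [apply: T21|apply: TC]; exists y.
  - by apply: T12; exists x.
  - by rewrite dC; apply: le_trans (HTne (sA _ K1x) (sB _ K2y)) dxy.
by have [sub _] := Kmin _ _ HC (@subIsetl _ _ _) (fun y => id); move=> x /sub[].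
Qed.

Lemma center_image r : T @` center K1 K2 r `<=` center K2 K1 r.
Proof.
have [[sA sB _ _ [T12 _ _]] _] := HK.
move=> _ [x [K1x Hx] <-]; split; first by apply: T12; exists x.
apply: (@minimal_hull [set w | d (T x) w <= r]).
- exact: mclosed_ball.
- exact: convex_ball.
by move=> _ [y K2y <-] /=; apply: le_trans (HTne (sA _ K1x) (sB _ K2y)) (Hx _ K2y).
Qed.

End Minimal.
End CyclicPair.

Lemma relatively_nonexpansiveC A B T :
  relatively_nonexpansive d A B T -> relatively_nonexpansive d B A T.
Proof. by move=> HT x y Bx Ay; rewrite dC (dC x); exact: HT. Qed.

Lemma invariant_pairC A B T E F :
  invariant_pair A B T E F -> invariant_pair B A T F E.
Proof.
move=> [sA sB aE aF [TEF TFE nEF]]; do 2!split => //.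
by rewrite dist_setC; exact: near_setC.
Qed.

Lemma minimal_invariant_pairC A B T K1 K2 :
  minimal_invariant_pair A B T K1 K2 -> minimal_invariant_pair B A T K2 K1.
Proof.
move=> [HK Kmin]; split; first exact: invariant_pairC.
by move=> E F /invariant_pairC HEF sE sF; have [] := Kmin _ _ HEF sF sE.
Qed.

Section MinimalPair.
Variables (A B : set X) (T : X -> X) (K1 K2 : set X).
Hypothesis HTne : relatively_nonexpansive d A B T.
Hypothesis HK : minimal_invariant_pair A B T K1 K2.
Local Notation D := (dist_set d A B).

Let HTne' := relatively_nonexpansiveC HTne.
Let HK' := minimal_invariant_pairC HK.

Lemma minimal_dist_set : dist_set d K1 K2 = D.
Proof.
have [[sA sB _ _ [_ _ nK]] _] := HK.
have [x [_ [K1x _ _]]] := nK 1 ltr01.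
have [y K2y dxy] := minimal_proximal HTne HK K1x.
rewrite -dxy; apply: dist_set_attained => // x' y' K1x' K2y'.
by rewrite dxy; apply: dist_set_le; [exact: sA|exact: sB].
Qed.

Lemma minimal_proximal_pair : proximal_pair d K1 K2.
Proof.
move=> a b K1a K2b; rewrite minimal_dist_set.
have [b' K2b' ab'] := minimal_proximal HTne HK K1a.
have [a' K1a' ba'] := minimal_proximal HTne' HK' K2b.
by exists a', b'; split; rewrite // dC ba' dist_setC.
Qed.

Lemma center_invariant r z1 z2 : center K1 K2 r z1 -> center K2 K1 r z2 ->
  d z1 z2 <= D -> invariant_pair A B T (center K1 K2 r) (center K2 K1 r).
Proof.
have [[sA sB aK1 aK2 _] _] := HK.
move=> c1 c2 dz; split.
- by move=> x [/sA].
- by move=> x [/sB].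
- exact: center_admissible.
- exact: center_admissible.
split.
- exact: (@center_image _ _ _ HTne _ _ HK r).
- exact: (@center_image _ _ _ HTne' _ _ HK' r).
- by move=> e e0; exists z1, z2; split => //; lra.
Qed.

Lemma minimal_center_bound r z1 z2 : center K1 K2 r z1 -> center K2 K1 r z2 ->
  d z1 z2 <= D -> forall x y, K1 x -> K2 y -> d x y <= r.
Proof.
move=> c1 c2 dz x y K1x K2y; have [_ Kmin] := HK.
have [sub _] := Kmin _ _ (center_invariant c1 c2 dz)
  (@center_sub _ _ _) (@center_sub _ _ _).
by have [_] := sub x K1x; apply.
Qed.

Lemma shrinking_centers (Dl : R) x1 x2 : K1 x1 -> K2 x2 ->
  (forall x y, K1 x -> K2 y -> d x y <= Dl) ->
  delta_pt d x1 K2 < Dl -> delta_pt d x2 K1 < Dl ->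
  exists r z1 z2, [/\ r < Dl, center K1 K2 r z1, center K2 K1 r z2 & d z1 z2 <= D].
Proof.
have [[_ _ [_ vK1 bK1] [_ vK2 bK2] _] _] := HK.
move=> K1x1 K2x2 HDl h1 h2.
have [u1 K2u1 du1] := minimal_proximal HTne HK K1x1.
have [u2 K1u2 du2] := minimal_proximal HTne' HK' K2x2.
rewrite dist_setC in du2.
have [z1 [z2 [[cz1 bz1] [cz2 bz2] dz]]] := exists_midpoints x1 u2 u1 x2.
set m := Num.max (delta_pt d x1 K2) (delta_pt d x2 K1).
have m1 : delta_pt d x1 K2 <= m by rewrite le_max lexx.
have m2 : delta_pt d x2 K1 <= m by rewrite le_max lexx orbT.
have mlt : m < Dl by rewrite gt_max h1 h2.
exists ((Dl + m) / 2), z1, z2; split.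
- lra.
- split; first exact: cz1.
  move=> y K2y; apply: le_trans (bz1 y) _.
  by have := delta_pt_ub x1 bK2 K2y; have := HDl _ _ K1u2 K2y; lra.
- split; first exact: cz2.
  move=> x K1x; apply: le_trans (bz2 x) _.
  have := delta_pt_ub x2 bK1 K1x; have := HDl _ _ K1x K2u1.
  by rewrite (dC u1); lra.
- by apply: le_trans dz _; rewrite du1 (dC u2) du2; lra.
Qed.

Hypothesis Hpns : proximal_normal_structure d A B.

Lemma minimal_pair_dist_le x y : K1 x -> K2 y -> d x y <= D.
Proof.
have [[sA sB [cK1 vK1 bK1] [cK2 vK2 bK2] _] _] := HK.
move=> K1x K2y; rewrite leNgt; apply/negP => Dlt.
set Dl := delta_set d K1 K2.
have HDl x' y' : K1 x' -> K2 y' -> d x' y' <= Dl := delta_set_ub bK1 bK2.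
have DDl : dist_set d K1 K2 < Dl by rewrite minimal_dist_set (lt_le_trans Dlt) ?HDl.
have [x1 [x2 [K1x1 K2x2 h1 h2]]] := Hpns cK1 cK2 bK1 bK2 vK1 vK2
  minimal_proximal_pair sA sB minimal_dist_set DDl.
have [r [z1 [z2 [rlt c1 c2 dz]]]] := shrinking_centers K1x1 K2x2 HDl h1 h2.
suff : Dl <= r by lra.
apply: ge_sup; first by exists (d x y), x, y.
by move=> _ [x' [y' [K1x' K2y' ->]]]; exact: (minimal_center_bound c1 c2 dz).
Qed.

End MinimalPair.

End ProximalNormalStructure.

Theorem mainTheorem2 (R : realType) (X : Type) (d : X -> X -> R)
  (Hd : is_metric d) (Hgeo : geodesic_space d) (Hbus : busemann_convex d)
  (Hrefl : reflexive_space d)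
  (A B : set X) (HA0 : A !=set0) (HB0 : B !=set0)
  (HAc : mclosed d A) (HBc : mclosed d B)
  (HAcv : convex_set d A) (HBcv : convex_set d B)
  (HAb : mbounded d A)
  (T : X -> X) (HTcyc : cyclic_map A B T)
  (HTne : relatively_nonexpansive d A B T)
  (Hpns : proximal_normal_structure d A B) :
  exists x y, [/\ A x, B y, d x (T x) = dist_set d A B &
                  d y (T y) = dist_set d A B].
Proof.
have [F HF] := invariant_pair_init Hd Hbus HTne HA0 HB0 HAc HBc HAcv HBcv HAb HTcyc.
have [K1 [K2 HK]] : exists K1 K2, minimal_invariant_pair d A B T K1 K2.
  by apply: (exists_minimal_invariant_pair Hd Hbus Hgeo Hrefl); exists A, F.
have [[sA sB _ _ [T12 T21 nK]] _] := HK.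
have [x [_ [K1x _ _]]] := nK 1 ltr01.
have K2Tx : K2 (T x) by apply: T12; exists x.
have K1TTx : K1 (T (T x)) by apply: T21; exists (T x).
have Dle := minimal_pair_dist_le Hd Hbus Hgeo Hrefl HTne HK Hpns.
exists x, (T x); split; [exact: sA|exact: sB| |].
- by apply/le_anti; rewrite Dle // dist_set_le //; [exact: sA|exact: sB].
- by apply/le_anti; rewrite dC // Dle // dist_set_le //; [exact: sA|exact: sB].
Qed.
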